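(* Let $T$ be an ergodic measure-preserving transformation of a Lebesgue probability space $(X,\mathcal B,\mu)$ and let $g\in L^1(X,\mu)$. Then for $\mu$-a.e. $x\in X$ the following holds. Suppose $(l_n)_{n\ge1}$ is a sequence of positive integers with $l_n\to\infty$, $R^g_{x,l_n}>0$ for all $n$, and suppose the functions $\varphi^g_{x,l_n}$ converge uniformly on $[0,1]$ to a continuous function $\varphi$. Then the sequence $(R^g_{x,l_n})_{n\ge1}$ is unbounded.
   Context: For $x\in X$ and an integer $j\ge0$ put $S^g_x(j)=\sum_{k=0}^{j-1}g(T^kx)$ (so $S^g_x(0)=0$), and let $F^g_x:[0,\infty)\to\mathbb R$ be the function that agrees with $S^g_x$ at nonnegative integers and is linear on each interval $[j,j+1]$. For a positive integer $l$ put $R^g_{x,l}=\max_{t\in[0,1]}\big|F^g_x(tl)-tF^g_x(l)\big|$ and, when $R^g_{x,l}>0$, $\varphi^g_{x,l}(t)=\big(F^g_x(tl)-tF^g_x(l)\big)/R^g_{x,l}$, $t\in[0,1]$. If $\varphi^g_{x,l_n}\to\varphi$ uniformly for some sequence $l_n$, the graph of $\varphi$ is called a limiting curve, $(l_n)$ a stabilizing sequence and $(R^g_{x,l_n})$ the normalizing sequence. *)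

From HB Require Import structures.
From mathcomp Require Import all_boot all_order all_algebra.
From mathcomp Require Import all_classical all_reals all_analysis.
Set Implicit Arguments. Unset Strict Implicit. Unset Printing Implicit Defensive.
Import Order.TTheory GRing.Theory Num.Theory.
Import numFieldNormedType.Exports.
Local Open Scope classical_set_scope.
Local Open Scope ring_scope.

Section Curves.
Context {X : Type} {R : realType}.

Definition birkhoff_sum (T : X -> X) (g : X -> R) (x : X) (j : nat) : R :=
  \sum_(0 <= k < j) g (iter k T x).

(* F^g_x : piecewise-linear interpolation of S^g_x on [0, oo)
   (for s < 0 the value is irrelevant; truncn s = 0 there). *)
Definition birkhoff_interp (T : X -> X) (g : X -> R) (x : X) (s : R) : R :=
  let j := Num.truncn s in
  birkhoff_sum T g x j + (s - j%:R) * g (iter j T x).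

Definition curve_num (T : X -> X) (g : X -> R) (x : X) (l : nat) (t : R) : R :=
  birkhoff_interp T g x (t * l%:R) - t * birkhoff_interp T g x l%:R.

(* R^g_{x,l} = max_{t in [0,1]} |F(tl) - t F(l)| (the max exists: continuous
   function on a compact set), written as the supremum of the image. *)
Definition curve_norm (T : X -> X) (g : X -> R) (x : X) (l : nat) : R :=
  sup [set `|curve_num T g x l t| | t in `[0, 1]].

Definition curve_phi (T : X -> X) (g : X -> R) (x : X) (l : nat) (t : R) : R :=
  curve_num T g x l t / curve_norm T g x l.

End Curves.

From HB Require Import structures.
From mathcomp Require Import all_boot all_order all_algebra.
From mathcomp Require Import all_classical all_reals all_analysis.
From mathcomp Require Import ring.
Import Order.TTheory GRing.Theory Num.Theory.
Import numFieldNormedType.Exports.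
Local Open Scope classical_set_scope.
Local Open Scope ring_scope.

(* The second difference S(j+1) - S(j) - S(1) + S(0) of the Birkhoff sums
   equals g(T^j x) - g(x), and it is R_{x,l} times the same second difference
   of phi_{x,l} at the grid points 0, 1/l, j/l, (j+1)/l.  Along l_n these points
   tend to 0, so by uniform convergence and continuity of phi the phi-terms tend
   to phi(0) - phi(0) - phi(0) + phi(0) = 0.  If R_{x,l_n} were bounded, g would
   therefore be constant along the orbit of x; then F is linear and
   R_{x,l} = 0, contradicting R_{x,l_n} > 0. *)

Section BirkhoffCurves.
Context {X : Type} {R : realType}.
Variables (T : X -> X) (g : X -> R) (x : X).

Lemma birkhoff_sum0 : birkhoff_sum T g x 0 = 0.
Proof. by rewrite /birkhoff_sum big_geq. Qed.

Lemma birkhoff_sumS j :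
  birkhoff_sum T g x j.+1 = birkhoff_sum T g x j + g (iter j T x).
Proof. by rewrite /birkhoff_sum big_nat_recr. Qed.

Lemma birkhoff_interp_nat n : birkhoff_interp T g x n%:R = birkhoff_sum T g x n.
Proof. by rewrite /birkhoff_interp natrK subrr mul0r addr0. Qed.

Lemma curve_num_grid l i : (0 < l)%N ->
  curve_num T g x l (i%:R / l%:R) =
  birkhoff_sum T g x i - i%:R / l%:R * birkhoff_sum T g x l.
Proof.
by move=> l_gt0; rewrite /curve_num divfK ?pnatr_eq0 -?lt0n // !birkhoff_interp_nat.
Qed.

(* The linear parts cancel since (j+1) - j - 1 + 0 = 0. *)
Lemma curve_num_second_difference l j : (0 < l)%N ->
  curve_num T g x l (j.+1%:R / l%:R) - curve_num T g x l (j%:R / l%:R)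
  - curve_num T g x l (1%:R / l%:R) + curve_num T g x l (0%:R / l%:R)
  = g (iter j T x) - g x.
Proof.
move=> l_gt0; rewrite !curve_num_grid // !birkhoff_sumS birkhoff_sum0 -natr1.
by ring.
Qed.

Lemma curve_phi_second_difference l j : (0 < l)%N ->
  curve_phi T g x l (j.+1%:R / l%:R) - curve_phi T g x l (j%:R / l%:R)
  - curve_phi T g x l (1%:R / l%:R) + curve_phi T g x l (0%:R / l%:R)
  = (g (iter j T x) - g x) / curve_norm T g x l.
Proof.
move=> l_gt0; rewrite -(curve_num_second_difference l j l_gt0).
by rewrite /curve_phi; ring.
Qed.

Lemma birkhoff_interp_orbit_const c : (forall j, g (iter j T x) = c) ->
  forall s, birkhoff_interp T g x s = s * c.
Proof.
move=> gc s.
have sum_c n : birkhoff_sum T g x n = n%:R * c.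
  elim: n => [|n IHn]; first by rewrite birkhoff_sum0 mul0r.
  by rewrite birkhoff_sumS IHn gc -natr1 mulrDl mul1r.
by rewrite /birkhoff_interp sum_c gc -mulrDl addrC subrK.
Qed.

Lemma curve_norm_orbit_const l : (forall j, g (iter j T x) = g x) ->
  curve_norm T g x l = 0.
Proof.
move=> gc; have num0 t : curve_num T g x l t = 0.
  by rewrite /curve_num !(birkhoff_interp_orbit_const _ gc) mulrA subrr.
rewrite /curve_norm; under eq_imagel => t _ do rewrite num0 normr0.
rewrite set_cst ifF ?sup1 //; apply/negbTE/set0P.
by exists 0; rewrite /= in_itv /= lexx ler01.
Qed.

End BirkhoffCurves.

Section UniformLimit.
Context {R : realType}.

Lemma uniform_cvg_along (I : interval R) (a : R) (f : nat -> R -> R)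
    (phi : R -> R) (s : nat -> R) :
  a \in I -> {within [set` I], continuous phi} ->
  (forall e : R, 0 < e -> exists N : nat, forall n, (N <= n)%N ->
     forall t : R, t \in I -> `|f n t - phi t| < e) ->
  (\forall n \near \oo, s n \in I) -> s n @[n --> \oo] --> a ->
  f n (s n) @[n --> \oo] --> phi a.
Proof.
move=> aI phic unif sI s_a.
have phi_a : phi t @[t --> within [set` I] (nbhs a)] --> phi a.
  by move/subspace_continuousP: phic; apply.
apply/cvgrPdist_lt => e e_gt0.
have e2_gt0 : 0 < e / 2 by rewrite divr_gt0.
have [N fN] := unif (e / 2) e2_gt0.
move/cvgrPdist_lt: phi_a => /(_ (e / 2) e2_gt0) phi_near.
near=> n.
have snI : s n \in I by near: n.
have phi_sn : `|phi a - phi (s n)| < e / 2.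
  by near: n; apply: filterS2 sI (s_a _ phi_near) => m smI; apply.
have f_sn : `|phi (s n) - f n (s n)| < e / 2.
  by rewrite distrC; apply: fN snI; near: n; exists N.
rewrite (splitr e) (le_lt_trans (ler_distD (phi (s n)) _ _)) //.
exact: ltrD.
Unshelve. all: end_near.
Qed.

Lemma grid_cvg0 (l : nat -> nat) i :
  (forall M : nat, exists N : nat, forall n, (N <= n)%N -> (M <= l n)%N) ->
  i%:R / (l n)%:R @[n --> \oo] --> (0 : R).
Proof.
move=> l_oo; apply/cvgrPdist_lt => e e_gt0.
have [N lN] := l_oo (Num.truncn (i%:R / e)).+1.
near=> n.
have ie_lt_l : i%:R / e < (l n)%:R.
  by apply: lt_le_trans (truncnS_gt _) _; rewrite ler_nat; apply: lN; near: n; exists N.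
have l_gt0 : (0 : R) < (l n)%:R.
  by apply: le_lt_trans _ ie_lt_l; rewrite divr_ge0 // ltW.
rewrite sub0r normrN ger0_norm ?divr_ge0 // ltr_pdivrMr //.
by rewrite mulrC -ltr_pdivrMr.
Unshelve. all: end_near.
Qed.

Lemma grid_in01 (l : nat -> nat) i :
  (forall M : nat, exists N : nat, forall n, (N <= n)%N -> (M <= l n)%N) ->
  \forall n \near \oo, i%:R / (l n)%:R \in `[0, 1 : R].
Proof.
move=> l_oo; have [N lN] := l_oo i; near=> n.
have il : (i <= l n)%N by apply: lN; near: n; exists N.
rewrite in_itv /= divr_ge0 //=; have [->|l_gt0] := posnP (l n).
  by rewrite invr0 mulr0.
by rewrite ler_pdivrMr ?ltr0n // mul1r ler_nat.
Unshelve. all: end_near.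
Qed.

End UniformLimit.

Lemma curve_norm_unbounded {X : Type} {R : realType} (T : X -> X) (g : X -> R)
    (x : X) (l : nat -> nat) (phi : R -> R) :
  (forall n, (0 < l n)%N) ->
  (forall M : nat, exists N : nat, forall n, (N <= n)%N -> (M <= l n)%N) ->
  (forall n, 0 < curve_norm T g x (l n)) ->
  {within `[0, 1], continuous phi} ->
  (forall e : R, 0 < e -> exists N : nat, forall n, (N <= n)%N ->
     forall t : R, t \in `[0, 1] -> `|curve_phi T g x (l n) t - phi t| < e) ->
  ~ (exists M : R, forall n, curve_norm T g x (l n) <= M).
Proof.
move=> l_gt0 l_oo norm_gt0 phic unif [M norm_le].
suff orbit_const j : g (iter j T x) = g x.
  by have := norm_gt0 0%N; rewrite curve_norm_orbit_const // ltxx.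
pose a i n := curve_phi T g x (l n) (i%:R / (l n)%:R).
have a_cvg i : a i n @[n --> \oo] --> phi 0.
  apply: uniform_cvg_along phic unif (grid_in01 l i l_oo) (grid_cvg0 l i l_oo).
  by rewrite in_itv /= lexx ler01.
pose d n := a j.+1 n - a j n - a 1%N n + a 0%N n.
have d_cvg : d n @[n --> \oo] --> 0.
  have := cvgD (cvgB (cvgB (a_cvg j.+1) (a_cvg j)) (a_cvg 1%N)) (a_cvg 0%N).
  by rewrite subrr sub0r addNr; apply.
have diff_le n : `|g (iter j T x) - g x| <= M * `|d n|.
  have norm_n_gt0 := norm_gt0 n.
  have -> : g (iter j T x) - g x = curve_norm T g x (l n) * d n.
    by rewrite /d /a curve_phi_second_difference // mulrC divfK ?gt_eqF.
  by rewrite normrM gtr0_norm // ler_wpM2r.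
have Md_cvg : M * `|d n| @[n --> \oo] --> 0.
  by have := cvgM (cvg_cst M) (cvg_norm d_cvg); rewrite normr0 mulr0; exact.
apply/eqP; rewrite -subr_eq0 -normr_le0 -(cvg_lim _ Md_cvg) //.
by apply: limr_ge; [exact: cvgP Md_cvg | exact: nearW].
Qed.

Theorem mainTheorem1 (d : measure_display) (X : measurableType d) (R : realType)
  (mu : probability X R) (T : X -> X)
  (mT : measurable_fun setT T)
  (Tpres : forall A : set X, measurable A -> mu (T @^-1` A) = mu A)
  (Terg : forall A : set X, measurable A -> T @^-1` A = A ->
            mu A = 0%E \/ mu A = 1%E)
  (g : X -> R) (gint : mu.-integrable setT (EFin \o g)) :
  {ae mu, forall x : X,
    forall (l : nat -> nat) (phi : R -> R),
      (forall n, (0 < l n)%N) ->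
      (forall M : nat, exists N : nat, forall n, (N <= n)%N -> (M <= l n)%N) ->
      (forall n, 0 < curve_norm T g x (l n)) ->
      {within `[0, 1], continuous phi} ->
      (forall e : R, 0 < e -> exists N : nat, forall n, (N <= n)%N ->
         forall t : R, t \in `[0, 1] -> `|curve_phi T g x (l n) t - phi t| < e) ->
      ~ (exists M : R, forall n, curve_norm T g x (l n) <= M)}.
Proof. by apply: aeW => x l phi; exact: curve_norm_unbounded. Qed.
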